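(* Let $(a,b,c)$ be a primitive Eisenstein triple, and let $m,n$ be positive coprime integers with $1\le m/n\le2$ and $3\nmid(m+n)$ such that either $(a,b,c)$ or $(b-a,b,c)$ equals $(m(2n-m),\ n(2m-n),\ m^2-mn+n^2)$. Let $\theta\in[\pi/3,\pi/2]$ satisfy $\cos\theta = |b-2a|/(2c)$, and define $$\Gamma_\theta = \begin{bmatrix}1&-\frac12\\0&\frac{\sqrt3}{2}\end{bmatrix}\begin{bmatrix} m & m-n\\ m-n & m\end{bmatrix}\mathbb{Z}^2 = \frac12\begin{bmatrix} m+n & m-2n\\ (m-n)\sqrt3 & m\sqrt3\end{bmatrix}\mathbb{Z}^2.$$ Then $\Gamma_\theta\in\mathrm{WR}(\Lambda_h)$, $C_h(\theta)$ is the set of all lattices in $\mathrm{WR}(\Lambda_h)$ similar to $\Gamma_\theta$, and $$|\Gamma_\theta| = c,\qquad \det\Gamma_\theta = b\frac{\sqrt3}{2},\qquad |\Lambda_h:\Gamma_\theta| = b.$$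
   Context: $\Lambda_h = \begin{bmatrix} 1 & -1/2 \\ 0 & \sqrt3/2\end{bmatrix}\mathbb{Z}^2$. For a full-rank lattice $\Gamma=A\mathbb{Z}^2\subset\mathbb{R}^2$, $\det\Gamma=|\det A|$, $|\Gamma|=\min\{\|y\|^2:y\in\Gamma\setminus\{0\}\}$, and for $\Gamma\subseteq\Lambda_h$, $|\Lambda_h:\Gamma|=\det\Gamma/\det\Lambda_h$. $\Gamma$ is well-rounded (WR) if it has a basis of vectors of squared norm $|\Gamma|$; such a basis can be chosen with angle in $[\pi/3,\pi/2]$ between its vectors, and this angle $\theta(\Gamma)$ is an invariant. $\mathrm{WR}(\Lambda_h)$ is the set of full-rank WR sublattices of $\Lambda_h$, $C_h(\theta)=\{\Omega\in\mathrm{WR}(\Lambda_h):\theta(\Omega)=\theta\}$. Lattices are similar if one is $\alpha A$ times the other for nonzero real $\alpha$ and $A\in O_2(\mathbb{R})$. An Eisenstein triple is $(a,b,c)\in\mathbb{Z}^3_{\ge0}\setminus\{0\}$ with $a^2-ab+b^2=c^2$; it is primitive if $a\le b$ and $\gcd(a,b,c)=1$. *)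

From Stdlib Require Import Reals ZArith ClassicalEpsilon.
Open Scope R_scope.

(* Points of R^2 and 2x2 real matrices (entries a11 a12 a21 a22). *)
Definition vec := (R * R)%type.
Definition mat := (R * R * R * R)%type.

Definition vadd (x y : vec) : vec := (fst x + fst y, snd x + snd y).
Definition vscal (t : R) (x : vec) : vec := (t * fst x, t * snd x).
Definition dot (x y : vec) : R := fst x * fst y + snd x * snd y.
Definition nrm2 (x : vec) : R := dot x x.
Definition det2 (v1 v2 : vec) : R := fst v1 * snd v2 - snd v1 * fst v2.

Definition mat_apply (A : mat) (x : vec) : vec :=
  match A with (a11, a12, a21, a22) =>
    (a11 * fst x + a12 * snd x, a21 * fst x + a22 * snd x) end.
Definition col1 (A : mat) : vec := match A with (a11, _, a21, _) => (a11, a21) end.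
Definition col2 (A : mat) : vec := match A with (_, a12, _, a22) => (a12, a22) end.
Definition matmul (A B : mat) : mat :=
  match A, B with (a11, a12, a21, a22), (b11, b12, b21, b22) =>
    (a11*b11 + a12*b21, a11*b12 + a12*b22, a21*b11 + a22*b21, a21*b12 + a22*b22) end.
Definition orthogonal (A : mat) : Prop :=
  match A with (a11, a12, a21, a22) =>
    a11*a11 + a21*a21 = 1 /\ a12*a12 + a22*a22 = 1 /\ a11*a12 + a21*a22 = 0 end.

Definition lattice := vec -> Prop.

Definition zspan (v1 v2 : vec) : lattice :=
  fun x => exists p q : Z, x = vadd (vscal (IZR p) v1) (vscal (IZR q) v2).

Definition mat_lat (A : mat) : lattice := zspan (col1 A) (col2 A).

Definition is_basis (G : lattice) (v1 v2 : vec) : Prop :=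
  det2 v1 v2 <> 0 /\ forall x, G x <-> zspan v1 v2 x.

Definition full_rank_lattice (G : lattice) : Prop := exists v1 v2, is_basis G v1 v2.

Definition sublattice (G L : lattice) : Prop := forall x, G x -> L x.

(* det G = |det A| for a basis matrix A (independent of the basis) *)
Definition lat_det (G : lattice) : R :=
  epsilon (inhabits 0) (fun d => exists v1 v2, is_basis G v1 v2 /\ d = Rabs (det2 v1 v2)).

(* |G| = min { ||y||^2 : y in G, y <> 0 } *)
Definition is_min_norm (G : lattice) (r : R) : Prop :=
  (exists y, G y /\ y <> (0, 0) /\ nrm2 y = r) /\
  (forall y, G y -> y <> (0, 0) -> r <= nrm2 y).
Definition lat_min (G : lattice) : R := epsilon (inhabits 0) (is_min_norm G).

Definition Mh : mat := (1, -(1/2), 0, sqrt 3 / 2).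
Definition Lambda_h : lattice := mat_lat Mh.

Definition lat_index (G : lattice) : R := lat_det G / lat_det Lambda_h.

Definition WR (G : lattice) : Prop :=
  full_rank_lattice G /\
  exists v1 v2, is_basis G v1 v2 /\ nrm2 v1 = lat_min G /\ nrm2 v2 = lat_min G.

Definition WR_h (G : lattice) : Prop := WR G /\ sublattice G Lambda_h.

Definition lat_angle (G : lattice) (t : R) : Prop :=
  PI / 3 <= t <= PI / 2 /\
  exists v1 v2, is_basis G v1 v2 /\ nrm2 v1 = lat_min G /\ nrm2 v2 = lat_min G /\
    cos t = dot v1 v2 / (sqrt (nrm2 v1) * sqrt (nrm2 v2)).

Definition C_h (t : R) (G : lattice) : Prop := WR_h G /\ lat_angle G t.

Definition similar (G H : lattice) : Prop :=
  exists (alpha : R) (A : mat), alpha <> 0 /\ orthogonal A /\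
    forall x, G x <-> exists y, H y /\ x = vscal alpha (mat_apply A y).

Definition eisenstein_triple (a b c : Z) : Prop :=
  (0 <= a)%Z /\ (0 <= b)%Z /\ (0 <= c)%Z /\ ~ (a = 0 /\ b = 0 /\ c = 0)%Z /\
  (a*a - a*b + b*b = c*c)%Z.
Definition primitive_eisenstein_triple (a b c : Z) : Prop :=
  eisenstein_triple a b c /\ (a <= b)%Z /\ Z.gcd (Z.gcd a b) c = 1%Z.

Definition Gamma_mn (m n : Z) : lattice :=
  mat_lat (matmul Mh (IZR m, IZR (m - n), IZR (m - n), IZR m)).

From Stdlib Require Import Reals ZArith Lra Lia Psatz ClassicalEpsilon.
Open Scope R_scope.

(* The columns [g1 = Mh (m, m-n)] and [g2 = Mh (m-n, m)] of the matrix defining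
   Gamma_theta have squared norm c = m^2 - mn + n^2 and inner product
   (2m^2 - 2mn - n^2)/2 = +-(b - 2a)/2.  After possibly replacing g2 by -g2 they form a
   reduced basis at angle theta: equal norms and 0 <= cos theta <= 1/2 give
   |p g1 + q g2|^2 >= (p^2 + q^2 - |pq|) c >= c for (p, q) <> 0, so Gamma_theta is well
   rounded with |Gamma_theta| = c.  A lattice with a minimal basis at angle theta has a
   Gram matrix proportional to that of (g1, g2), hence is similar to Gamma_theta, and a
   similarity maps a reduced basis to a reduced basis at the same angle.  Finally
   det [[m, m-n], [m-n, m]] = n(2m - n) = b gives the determinant and the index. *)

Lemma zspan_l (v1 v2 : vec) : zspan v1 v2 v1.
Proof. exists 1%Z, 0%Z; destruct v1, v2; unfold vadd, vscal; simpl; f_equal; ring. Qed.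

Lemma zspan_r (v1 v2 : vec) : zspan v1 v2 v2.
Proof. exists 0%Z, 1%Z; destruct v1, v2; unfold vadd, vscal; simpl; f_equal; ring. Qed.

Lemma nrm2_comb (p q : R) (v1 v2 : vec) :
  nrm2 (vadd (vscal p v1) (vscal q v2)) =
  p * p * nrm2 v1 + 2 * (p * q) * dot v1 v2 + q * q * nrm2 v2.
Proof. destruct v1, v2; unfold nrm2, dot, vadd, vscal; simpl; ring. Qed.

Lemma det2_comb (p1 q1 p2 q2 : R) (w1 w2 : vec) :
  det2 (vadd (vscal p1 w1) (vscal q1 w2)) (vadd (vscal p2 w1) (vscal q2 w2)) =
  (p1 * q2 - q1 * p2) * det2 w1 w2.
Proof. destruct w1, w2; unfold det2, vadd, vscal; simpl; ring. Qed.

Lemma nrm2_pos_of_det2 (v1 v2 : vec) : det2 v1 v2 <> 0 -> 0 < nrm2 v1.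
Proof.
  destruct v1 as [x y], v2; unfold det2, nrm2, dot; simpl; intro Hdet.
  destruct (Req_dec x 0); destruct (Req_dec y 0); subst; [lra | nra | nra | nra].
Qed.

Lemma is_min_norm_unique (G : lattice) (r1 r2 : R) :
  is_min_norm G r1 -> is_min_norm G r2 -> r1 = r2.
Proof.
  intros [[y1 [G1 [n1 <-]]] H1] [[y2 [G2 [n2 <-]]] H2].
  specialize (H1 y2 G2 n2); specialize (H2 y1 G1 n1); lra.
Qed.

Lemma lat_min_of_is_min_norm (G : lattice) (r : R) : is_min_norm G r -> lat_min G = r.
Proof.
  intro Hr; apply (is_min_norm_unique G); [|exact Hr].
  exact (epsilon_spec (inhabits 0) (is_min_norm G) (ex_intro _ r Hr)).
Qed.

Lemma Z_sq_add_sub_abs_ge1 (p q : Z) :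
  (p <> 0 \/ q <> 0)%Z -> (1 <= p * p + q * q - Z.abs (p * q))%Z.
Proof. intro Hpq; destruct (Z.abs_spec (p * q)) as [[_ ->]|[_ ->]]; nia. Qed.

Lemma reduced_basis_is_min_norm (G : lattice) (v1 v2 : vec) :
  is_basis G v1 v2 -> nrm2 v2 = nrm2 v1 -> 2 * Rabs (dot v1 v2) <= nrm2 v1 ->
  is_min_norm G (nrm2 v1).
Proof.
  intros [Hdet HG] Hn2 Hdot.
  pose proof (nrm2_pos_of_det2 _ _ Hdet) as Hpos.
  split.
  - exists v1; split; [apply HG, zspan_l|split; [|reflexivity]].
    intros E; rewrite E in Hpos; unfold nrm2, dot in Hpos; simpl in Hpos; lra.
  - intros y Hy Hy0; apply HG in Hy; destruct Hy as [p [q ->]].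
    assert (Hpq : (p <> 0 \/ q <> 0)%Z).
    { destruct (Z.eq_dec p 0), (Z.eq_dec q 0); auto; subst; exfalso; apply Hy0.
      destruct v1, v2; unfold vadd, vscal; simpl; f_equal; ring. }
    pose proof (Z_sq_add_sub_abs_ge1 p q Hpq) as Hform.
    apply IZR_le in Hform.
    rewrite minus_IZR, plus_IZR, !mult_IZR, abs_IZR, mult_IZR in Hform.
    rewrite nrm2_comb, Hn2; revert Hform Hdot.
    generalize (IZR p) (IZR q) (dot v1 v2); intros P Q d.
    unfold Rabs; destruct (Rcase_abs (P * Q)), (Rcase_abs d); intros; nra.
Qed.

Lemma basis_det_Rabs_unique (G : lattice) (v1 v2 w1 w2 : vec) :
  is_basis G v1 v2 -> is_basis G w1 w2 -> Rabs (det2 v1 v2) = Rabs (det2 w1 w2).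
Proof.
  intros [Hdv Hv] [Hdw Hw].
  destruct (proj1 (Hw v1) (proj2 (Hv v1) (zspan_l v1 v2))) as [p1 [q1 E1]].
  destruct (proj1 (Hw v2) (proj2 (Hv v2) (zspan_r v1 v2))) as [p2 [q2 E2]].
  destruct (proj1 (Hv w1) (proj2 (Hw w1) (zspan_l w1 w2))) as [p3 [q3 E3]].
  destruct (proj1 (Hv w2) (proj2 (Hw w2) (zspan_r w1 w2))) as [p4 [q4 E4]].
  assert (D1 : det2 v1 v2 = IZR (p1 * q2 - q1 * p2) * det2 w1 w2).
  { rewrite E1, E2, det2_comb, minus_IZR, !mult_IZR; reflexivity. }
  assert (D2 : det2 w1 w2 = IZR (p3 * q4 - q3 * p4) * det2 v1 v2).
  { rewrite E3, E4, det2_comb, minus_IZR, !mult_IZR; reflexivity. }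
  assert (Hunit : ((p1 * q2 - q1 * p2) * (p3 * q4 - q3 * p4) = 1)%Z).
  { apply eq_IZR; rewrite mult_IZR; apply (Rmult_eq_reg_r (det2 v1 v2)); [|exact Hdv].
    rewrite Rmult_assoc, <- D2, <- D1; ring. }
  rewrite D1, Rabs_mult, <- abs_IZR.
  apply Z.eq_mul_1 in Hunit; destruct Hunit as [-> | ->]; simpl; ring.
Qed.

Lemma lat_det_of_basis (G : lattice) (v1 v2 : vec) :
  is_basis G v1 v2 -> lat_det G = Rabs (det2 v1 v2).
Proof.
  intro Hb; unfold lat_det.
  destruct (epsilon_spec (inhabits 0)
              (fun d => exists w1 w2, is_basis G w1 w2 /\ d = Rabs (det2 w1 w2))
              (ex_intro _ _ (ex_intro _ v1 (ex_intro _ v2 (conj Hb eq_refl)))))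
    as [w1 [w2 [Hw ->]]].
  exact (basis_det_Rabs_unique G w1 w2 v1 v2 Hw Hb).
Qed.

Lemma basis_with_nonneg_dot (G : lattice) (v1 v2 : vec) :
  is_basis G v1 v2 ->
  exists v2', is_basis G v1 v2' /\ nrm2 v2' = nrm2 v2 /\ dot v1 v2' = Rabs (dot v1 v2).
Proof.
  intros [Hdet HG]; destruct (Rle_dec 0 (dot v1 v2)) as [Hd|Hd].
  - exists v2; rewrite Rabs_right by lra; repeat split; auto; apply HG; assumption.
  - exists (vscal (-1) v2); rewrite Rabs_left by lra.
    destruct v1, v2; unfold is_basis, det2, nrm2, dot, vscal in *; simpl in *.
    repeat split; [intro; apply Hdet; nra| | |ring|ring].
    + intro Hx; apply HG in Hx; destruct Hx as [p [q ->]]; exists p, (- q)%Z.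
      unfold vadd, vscal; simpl; rewrite opp_IZR; f_equal; ring.
    + intros [p [q ->]]; apply HG; exists p, (- q)%Z.
      unfold vadd, vscal; simpl; rewrite opp_IZR; f_equal; ring.
Qed.

Definition sim_map (al : R) (A : mat) (y : vec) : vec := vscal al (mat_apply A y).

Lemma sim_map_comb (al : R) (A : mat) (p q : R) (w1 w2 : vec) :
  sim_map al A (vadd (vscal p w1) (vscal q w2)) =
  vadd (vscal p (sim_map al A w1)) (vscal q (sim_map al A w2)).
Proof.
  destruct A as [[[a b] c] d]; destruct w1, w2.
  unfold sim_map, vadd, vscal, mat_apply; simpl; f_equal; ring.
Qed.

Lemma sim_map_dot (al : R) (A : mat) (y z : vec) :
  orthogonal A -> dot (sim_map al A y) (sim_map al A z) = al * al * dot y z.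
Proof.
  destruct A as [[[a11 a12] a21] a22]; destruct y as [y1 y2], z as [z1 z2].
  unfold orthogonal, sim_map, dot, vscal, mat_apply; simpl; intros [H1 [H2 H12]].
  transitivity (al * al * (y1 * z1 * (a11 * a11 + a21 * a21)
                  + (y1 * z2 + y2 * z1) * (a11 * a12 + a21 * a22)
                  + y2 * z2 * (a12 * a12 + a22 * a22))); [ring|].
  rewrite H1, H2, H12; ring.
Qed.

Lemma sim_map_det2_neq0 (al : R) (A : mat) (y z : vec) :
  orthogonal A -> al <> 0 -> det2 y z <> 0 -> det2 (sim_map al A y) (sim_map al A z) <> 0.
Proof.
  destruct A as [[[a11 a12] a21] a22]; destruct y as [y1 y2], z as [z1 z2].
  unfold orthogonal, sim_map, det2, vscal, mat_apply; simpl; intros [H1 [H2 H12]] Hal Hdet.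
  assert (HA : (a11 * a22 - a12 * a21) * (a11 * a22 - a12 * a21) = 1).
  { transitivity ((a11 * a11 + a21 * a21) * (a12 * a12 + a22 * a22)
                  - (a11 * a12 + a21 * a22) * (a11 * a12 + a21 * a22)); [ring|].
    rewrite H1, H2, H12; ring. }
  intro E.
  assert (E' : al * al * (a11 * a22 - a12 * a21) * (y1 * z2 - y2 * z1) = 0)
    by (rewrite <- E; ring).
  repeat (apply Rmult_integral in E'; destruct E' as [E'|E']); subst; nra.
Qed.

Lemma similar_image_zspan (G H : lattice) (al : R) (A : mat) (w1 w2 : vec) :
  (forall x, H x <-> zspan w1 w2 x) ->
  (forall x, G x <-> exists y, H y /\ x = sim_map al A y) <->
  (forall x, G x <-> zspan (sim_map al A w1) (sim_map al A w2) x).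
Proof.
  intro HH.
  assert (Himage : forall x, (exists y, H y /\ x = sim_map al A y) <->
                             zspan (sim_map al A w1) (sim_map al A w2) x).
  { intro x; split.
    - intros [y [Hy ->]]; apply HH in Hy; destruct Hy as [p [q ->]].
      exists p, q; apply sim_map_comb.
    - intros [p [q ->]]; exists (vadd (vscal (IZR p) w1) (vscal (IZR q) w2)).
      split; [apply HH; exists p, q; reflexivity | symmetry; apply sim_map_comb]. }
  split; intros HG x; rewrite HG; [|symmetry]; apply Himage.
Qed.

(* The orthogonal part is U W^-1 / al, with U, W the column matrices of (u1, u2) and
   (w1, w2) and al = sqrt k; proportional Gram matrices make it orthogonal. *)
Lemma sim_map_of_gram (u1 u2 w1 w2 : vec) (k : R) :
  0 < k -> det2 w1 w2 <> 0 ->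
  nrm2 u1 = k * nrm2 w1 -> nrm2 u2 = k * nrm2 w2 -> dot u1 u2 = k * dot w1 w2 ->
  exists al A, al <> 0 /\ orthogonal A /\ sim_map al A w1 = u1 /\ sim_map al A w2 = u2.
Proof.
  destruct u1 as [x1 y1], u2 as [x2 y2], w1 as [p1 q1], w2 as [p2 q2].
  unfold det2, nrm2, dot; simpl; intros Hk Hdet H1 H2 H12.
  assert (Hal : sqrt k * sqrt k = k) by (apply sqrt_sqrt; lra).
  assert (Hal_pos : 0 < sqrt k) by (apply sqrt_lt_R0; lra).
  revert Hal Hal_pos; generalize (sqrt k); intros al Hal Hal_pos.
  set (d := p1 * q2 - q1 * p2) in *.
  assert (Hsq : forall a b e f, a / (d * al) * (b / (d * al)) + e / (d * al) * (f / (d * al))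
                                = (a * b + e * f) / (d * d * (al * al)))
    by (intros; field; split; lra).
  exists al, ((x1 * q2 - x2 * q1) / (d * al), (x2 * p1 - x1 * p2) / (d * al),
              (y1 * q2 - y2 * q1) / (d * al), (y2 * p1 - y1 * p2) / (d * al)).
  split; [lra|]; split; [unfold orthogonal; rewrite !Hsq; split; [|split]|].
  - replace ((x1 * q2 - x2 * q1) * (x1 * q2 - x2 * q1) + (y1 * q2 - y2 * q1) * (y1 * q2 - y2 * q1))
      with (q2 * q2 * (x1 * x1 + y1 * y1) - 2 * q1 * q2 * (x1 * x2 + y1 * y2)
            + q1 * q1 * (x2 * x2 + y2 * y2)) by ring.
    rewrite H1, H2, H12, Hal; unfold d; field; split; [lra|fold d; auto].
  - replace ((x2 * p1 - x1 * p2) * (x2 * p1 - x1 * p2) + (y2 * p1 - y1 * p2) * (y2 * p1 - y1 * p2))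
      with (p2 * p2 * (x1 * x1 + y1 * y1) - 2 * p1 * p2 * (x1 * x2 + y1 * y2)
            + p1 * p1 * (x2 * x2 + y2 * y2)) by ring.
    rewrite H1, H2, H12, Hal; unfold d; field; split; [lra|fold d; auto].
  - replace ((x1 * q2 - x2 * q1) * (x2 * p1 - x1 * p2) + (y1 * q2 - y2 * q1) * (y2 * p1 - y1 * p2))
      with (- (q2 * p2) * (x1 * x1 + y1 * y1) + (q2 * p1 + q1 * p2) * (x1 * x2 + y1 * y2)
            - q1 * p1 * (x2 * x2 + y2 * y2)) by ring.
    rewrite H1, H2, H12, Hal; unfold d; field; split; [lra|fold d; auto].
  - unfold sim_map, vscal, mat_apply; simpl; split; f_equal; unfold d in *; field; split; lra.
Qed.

Lemma similar_of_proportional_gram (G H : lattice) (u1 u2 w1 w2 : vec) (k : R) :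
  is_basis G u1 u2 -> is_basis H w1 w2 -> 0 < k ->
  nrm2 u1 = k * nrm2 w1 -> nrm2 u2 = k * nrm2 w2 -> dot u1 u2 = k * dot w1 w2 ->
  similar G H.
Proof.
  intros [_ HG] [Hdet HH] Hk H1 H2 H12.
  destruct (sim_map_of_gram u1 u2 w1 w2 k Hk Hdet H1 H2 H12) as [al [A [Hal [HA [E1 E2]]]]].
  exists al, A; split; [exact Hal|split; [exact HA|]].
  apply (proj2 (similar_image_zspan G H al A w1 w2 HH)); rewrite E1, E2; exact HG.
Qed.

Lemma cos_angle_bounds (t : R) : PI / 3 <= t <= PI / 2 -> 0 <= cos t <= 1 / 2.
Proof.
  intro Ht; pose proof PI_RGT_0 as Hpi; split.
  - apply cos_ge_0; lra.
  - destruct (Req_dec t (PI / 3)) as [->|Hne]; [rewrite cos_PI3; lra|].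
    rewrite <- cos_PI3; apply Rlt_le, cos_decreasing_1; lra.
Qed.

Section ReducedBasis.

Variables (G : lattice) (v1 v2 : vec) (t : R).
Hypotheses (Hbasis : is_basis G v1 v2) (Hnrm : nrm2 v2 = nrm2 v1)
  (Hcos : dot v1 v2 = nrm2 v1 * cos t) (Ht : PI / 3 <= t <= PI / 2).

Lemma lat_min_reduced_basis : lat_min G = nrm2 v1.
Proof.
  apply lat_min_of_is_min_norm, (reduced_basis_is_min_norm G v1 v2); [exact Hbasis|exact Hnrm|].
  pose proof (nrm2_pos_of_det2 _ _ (proj1 Hbasis)) as Hpos.
  pose proof (cos_angle_bounds t Ht) as Hc.
  rewrite Hcos, Rabs_mult, !Rabs_right by lra; nra.
Qed.

Lemma WR_reduced_basis : WR G.
Proof.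
  split; [exists v1, v2; exact Hbasis|].
  exists v1, v2; rewrite lat_min_reduced_basis; auto.
Qed.

Lemma lat_angle_reduced_basis : lat_angle G t.
Proof.
  split; [exact Ht|]; exists v1, v2; rewrite lat_min_reduced_basis.
  pose proof (nrm2_pos_of_det2 _ _ (proj1 Hbasis)) as Hpos.
  split; [exact Hbasis|split; [reflexivity|split; [exact Hnrm|]]].
  rewrite Hnrm, sqrt_sqrt, Hcos by lra; field; lra.
Qed.

End ReducedBasis.

Lemma lat_angle_iff_similar (H : lattice) (w1 w2 : vec) (t : R) :
  is_basis H w1 w2 -> nrm2 w2 = nrm2 w1 -> dot w1 w2 = nrm2 w1 * cos t ->
  PI / 3 <= t <= PI / 2 ->
  forall G : lattice, lat_angle G t <-> similar G H.
Proof.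
  intros Hbasis Hnrm Hcos Ht G; pose proof (nrm2_pos_of_det2 _ _ (proj1 Hbasis)) as Hw.
  split.
  - intros [_ [u1 [u2 [Hu [Hu1 [Hu2 Hc]]]]]].
    pose proof (nrm2_pos_of_det2 _ _ (proj1 Hu)) as Hr; rewrite Hu1 in Hr.
    rewrite Hu1, Hu2, sqrt_sqrt in Hc by lra.
    apply (similar_of_proportional_gram G H u1 u2 w1 w2 (lat_min G / nrm2 w1) Hu Hbasis).
    + apply Rdiv_lt_0_compat; assumption.
    + rewrite Hu1; field; lra.
    + rewrite Hu2, Hnrm; field; lra.
    + rewrite Hcos, Hc; field; lra.
  - intros [al [A [Hal [HA Himage]]]].
    pose proof (proj1 (similar_image_zspan G H al A w1 w2 (proj2 Hbasis)) Himage) as HG.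
    apply (lat_angle_reduced_basis G (sim_map al A w1) (sim_map al A w2) t); [| | |exact Ht].
    + split; [apply sim_map_det2_neq0; auto; apply Hbasis | exact HG].
    + unfold nrm2; rewrite !sim_map_dot by exact HA; fold (nrm2 w1) (nrm2 w2); rewrite Hnrm; reflexivity.
    + unfold nrm2; rewrite !sim_map_dot by exact HA; fold (nrm2 w1); rewrite Hcos; ring.
Qed.

Lemma mat_lat_is_basis (A : mat) :
  det2 (col1 A) (col2 A) <> 0 -> is_basis (mat_lat A) (col1 A) (col2 A).
Proof. intro Hdet; split; [exact Hdet | intro; reflexivity]. Qed.

Lemma mat_lat_int_sublattice (A : mat) (p q r s : Z) :
  sublattice (mat_lat (matmul A (IZR p, IZR q, IZR r, IZR s))) (mat_lat A).
Proof.
  destruct A as [[[a11 a12] a21] a22]; intros x [u [v ->]].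
  exists (u * p + v * q)%Z, (u * r + v * s)%Z.
  unfold col1, col2, matmul, vadd, vscal; simpl; rewrite !plus_IZR, !mult_IZR; f_equal; ring.
Qed.

Lemma col1_matmul (A B : mat) : col1 (matmul A B) = mat_apply A (col1 B).
Proof. destruct A as [[[? ?] ?] ?], B as [[[? ?] ?] ?]; reflexivity. Qed.

Lemma col2_matmul (A B : mat) : col2 (matmul A B) = mat_apply A (col2 B).
Proof. destruct A as [[[? ?] ?] ?], B as [[[? ?] ?] ?]; reflexivity. Qed.

Lemma dot_Mh (x y : vec) :
  dot (mat_apply Mh x) (mat_apply Mh y) =
  fst x * fst y - (fst x * snd y + snd x * fst y) / 2 + snd x * snd y.
Proof.
  destruct x as [x1 x2], y as [y1 y2]; unfold dot, Mh, mat_apply; simpl.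
  transitivity ((x1 - x2 / 2) * (y1 - y2 / 2) + sqrt 3 * sqrt 3 * (x2 * y2) / 4); [field|].
  rewrite sqrt_sqrt by lra; field.
Qed.

Lemma det2_Mh (x y : vec) : det2 (mat_apply Mh x) (mat_apply Mh y) = sqrt 3 / 2 * det2 x y.
Proof. destruct x, y; unfold det2, Mh, mat_apply; simpl; field. Qed.

Lemma lat_det_Lambda_h : lat_det Lambda_h = sqrt 3 / 2.
Proof.
  assert (Hs : 0 < sqrt 3) by (apply sqrt_lt_R0; lra).
  assert (Hdet : det2 (col1 Mh) (col2 Mh) = sqrt 3 / 2)
    by (unfold det2, Mh, col1, col2; simpl; ring).
  unfold Lambda_h; rewrite (lat_det_of_basis _ _ _ (mat_lat_is_basis Mh ltac:(lra))), Hdet, Rabs_right; lra.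
Qed.

Definition Gamma_mat (m n : Z) : mat := matmul Mh (IZR m, IZR (m - n), IZR (m - n), IZR m).

Lemma Gamma_mat_gram (m n : Z) :
  nrm2 (col1 (Gamma_mat m n)) = IZR (m * m - m * n + n * n) /\
  nrm2 (col2 (Gamma_mat m n)) = IZR (m * m - m * n + n * n) /\
  2 * dot (col1 (Gamma_mat m n)) (col2 (Gamma_mat m n)) = IZR (2 * m * m - 2 * m * n - n * n) /\
  det2 (col1 (Gamma_mat m n)) (col2 (Gamma_mat m n)) = IZR (n * (2 * m - n)) * (sqrt 3 / 2).
Proof.
  unfold Gamma_mat, nrm2; rewrite col1_matmul, col2_matmul, !dot_Mh, det2_Mh.
  unfold det2; cbn [fst snd col1 col2].
  repeat (rewrite plus_IZR || rewrite minus_IZR || rewrite mult_IZR).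
  repeat split; field.
Qed.

Lemma param_triple_facts (a b c m n : Z) :
  (((a, b, c) = (m * (2*n - m), n * (2*m - n), m*m - m*n + n*n)) \/
   ((b - a, b, c) = (m * (2*n - m), n * (2*m - n), m*m - m*n + n*n)))%Z ->
  (b = n * (2 * m - n) /\ c = m * m - m * n + n * n /\
   Z.abs (b - 2 * a) = Z.abs (2 * m * m - 2 * m * n - n * n))%Z.
Proof.
  intros [E|E]; rewrite !pair_equal_spec in E; destruct E as [[Ea Eb] Ec];
    (split; [exact Eb|split; [exact Ec|]]).
  - f_equal; nia.
  - rewrite <- Z.abs_opp; f_equal; nia.
Qed.

Lemma param_b_pos (m n : Z) : (0 < n)%Z -> 1 <= IZR m / IZR n -> (0 < n * (2 * m - n))%Z.
Proof.
  intros Hn Hratio; apply Z.mul_pos_pos; [exact Hn|].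
  apply IZR_lt in Hn; apply lt_IZR; rewrite minus_IZR, mult_IZR.
  replace (IZR m) with (IZR m / IZR n * IZR n) by (field; lra); nra.
Qed.

Theorem lemma4p7 (a b c m n : Z) (t : R) :
  primitive_eisenstein_triple a b c ->
  (0 < m)%Z -> (0 < n)%Z -> Z.gcd m n = 1%Z ->
  1 <= IZR m / IZR n <= 2 ->
  ~ (3 | m + n)%Z ->
  (((a, b, c) = (m * (2*n - m), n * (2*m - n), m*m - m*n + n*n)) \/
   ((b - a, b, c) = (m * (2*n - m), n * (2*m - n), m*m - m*n + n*n)))%Z ->
  PI / 3 <= t <= PI / 2 ->
  cos t = Rabs (IZR (b - 2*a)) / (2 * IZR c) ->
  WR_h (Gamma_mn m n) /\
  (forall G : lattice, C_h t G <-> (WR_h G /\ similar G (Gamma_mn m n))) /\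
  lat_min (Gamma_mn m n) = IZR c /\
  lat_det (Gamma_mn m n) = IZR b * (sqrt 3 / 2) /\
  lat_index (Gamma_mn m n) = IZR b.
Proof.
  intros _ _ Hn _ [Hratio _] _ Hparam Ht Hcos.
  destruct (param_triple_facts a b c m n Hparam) as [-> [-> Habs]].
  destruct (Gamma_mat_gram m n) as [Hn1 [Hn2 [Hdot Hdet]]].
  pose proof (IZR_lt _ _ (param_b_pos m n Hn Hratio)) as Hb.
  assert (Hs : 0 < sqrt 3) by (apply sqrt_lt_R0; lra).
  assert (Hbasis : is_basis (Gamma_mn m n) (col1 (Gamma_mat m n)) (col2 (Gamma_mat m n)))
    by (apply mat_lat_is_basis; rewrite Hdet; nra).
  destruct (basis_with_nonneg_dot _ _ _ Hbasis) as [g2 [Hbasis' [Hg2 Hdot']]].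
  assert (Hnrm : nrm2 g2 = nrm2 (col1 (Gamma_mat m n))) by (rewrite Hg2, Hn1, Hn2; reflexivity).
  assert (Hcos' : dot (col1 (Gamma_mat m n)) g2 = nrm2 (col1 (Gamma_mat m n)) * cos t).
  { rewrite <- abs_IZR, Habs, abs_IZR, <- Hdot, <- Hn1, Rabs_mult, Rabs_right in Hcos by lra.
    pose proof (nrm2_pos_of_det2 _ _ (proj1 Hbasis)); rewrite Hdot', Hcos; field; lra. }
  pose proof (lat_min_reduced_basis _ _ _ t Hbasis' Hnrm Hcos' Ht) as Hmin.
  assert (Hdet_Gamma : lat_det (Gamma_mn m n) = IZR (n * (2 * m - n)) * (sqrt 3 / 2))
    by (rewrite (lat_det_of_basis _ _ _ Hbasis), Hdet, Rabs_right; nra).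
  split; [|split; [|split; [|split]]].
  - split; [exact (WR_reduced_basis _ _ _ t Hbasis' Hnrm Hcos' Ht)|apply mat_lat_int_sublattice].
  - intro G; unfold C_h; rewrite (lat_angle_iff_similar _ _ _ t Hbasis' Hnrm Hcos' Ht G); tauto.
  - rewrite Hmin, Hn1; reflexivity.
  - exact Hdet_Gamma.
  - unfold lat_index; rewrite Hdet_Gamma, lat_det_Lambda_h; field; lra.
Qed.
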